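(* Let $R$ be a unital associative algebra over an infinite field $F$, let $n\geq 3$ be an integer, and let $p\in F[x]$ be a nonconstant polynomial. Then every (upper or lower) triangular matrix in $\mathrm{M}_n(R)$ can be written as a product of two elements of $p[\mathrm{M}_n(R),\mathrm{M}_n(R)]=\{p(AB)-p(BA)\mid A,B\in\mathrm{M}_n(R)\}$. *)

From mathcomp Require Import all_boot all_algebra.
Set Implicit Arguments. Unset Strict Implicit. Unset Printing Implicit Defensive.
Import GRing.Theory.
Local Open Scope ring_scope.

Definition mxpow (R : pzRingType) (n : nat) (A : 'M[R]_n) (k : nat) : 'M[R]_n :=
  iter k (mulmx A) 1%:M.

Definition mx_peval (F : fieldType) (R : algType F) (n : nat)
    (p : {poly F}) (A : 'M[R]_n) : 'M[R]_n :=
  \sum_(i < size p) ((p`_i)%:A : R)%:M *m mxpow A i.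

Definition p_commutator_set (F : fieldType) (R : algType F) (n : nat)
    (p : {poly F}) (C : 'M[R]_n) : Prop :=
  exists A B : 'M[R]_n, C = mx_peval p (A *m B) - mx_peval p (B *m A).

Definition infinite_type (T : eqType) : Prop :=
  forall s : seq T, exists x : T, x \notin s.

From mathcomp Require Import all_boot all_algebra zify.
Set Implicit Arguments. Unset Strict Implicit. Unset Printing Implicit Defensive.
Import GRing.Theory.
Local Open Scope ring_scope.

(** First, every matrix M with zero diagonal lies in
    p[M_n(R), M_n(R)]: as F is infinite, pick mu with the values p(mu_i)
    pairwise distinct and put Delta = diag(p(mu_i)) = p(diag mu).  Splitting
    M = U - L into strictly upper and lower parts, Delta + U and Delta + L are
    similar to Delta (a strictly triangular perturbation of a diagonal matrix
    with distinct entries is similar to it), hence equal p(A) and p(B) with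
    A = K1 Z K1^-1 and B = K2 Z K2^-1 for Z = diag mu; then A = XY and B = YX
    for X = K1 K2^-1 and Y = K2 Z K1^-1.  Second, for n >= 3 every triangular
    matrix is a product of two matrices with zero diagonal: for lower
    triangular T, T = (T P^-1) P with P the cyclic shift, up to rank-one
    corrections; the upper case follows by conjugating with the reversal
    permutation. *)

Section RingMatrices.
Variable R : pzRingType.

Definition rev_mx n : 'M[R]_n := rowsub (@rev_ord n) 1%:M.

Lemma rev_mx_conj n (A : 'M[R]_n) :
  rev_mx n *m A *m rev_mx n = mxsub (@rev_ord n) (@rev_ord n) A.
Proof.
have revC : rev_mx n = colsub (@rev_ord n) 1%:M.
  by apply/matrixP => i j; rewrite !mxE (canF_eq rev_ordK) eq_sym.
by rewrite [X in _ *m X]revC mulmx_colsub mulmx1 -rowsubE -mxsubcr.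
Qed.

Lemma rev_mxK n : rev_mx n *m rev_mx n = 1%:M.
Proof.
rewrite -[X in X *m _]mulmx1 rev_mx_conj.
by apply/matrixP => i j; rewrite !mxE (inj_eq rev_ord_inj).
Qed.

Lemma rev_mx_conjK n (A : 'M[R]_n) :
  rev_mx n *m (rev_mx n *m A *m rev_mx n) *m rev_mx n = A.
Proof. by rewrite !mulmxA rev_mxK mul1mx -mulmxA rev_mxK mulmx1. Qed.

Lemma mxpow_conj n (K K' A : 'M[R]_n) k :
  K' *m K = 1%:M -> K *m K' = 1%:M ->
  mxpow (K *m A *m K') k = K *m mxpow A k *m K'.
Proof.
move=> K'K KK'; elim: k => [|k IH] /=; first by rewrite /mxpow /= mulmx1 KK'.
rewrite /mxpow /= -/(mxpow _ k) -/(mxpow _ k) IH.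
by rewrite !mulmxA -[K *m A *m K' *m K]mulmxA K'K mulmx1.
Qed.

End RingMatrices.

Section AlgebraMatrices.
Variables (F : fieldType) (R : algType F).

Definition diag_alg_mx n (d : 'I_n -> F) : 'M[R]_n := diag_mx (\row_i (d i)%:A).

Lemma diag_alg_mxE n (d : 'I_n -> F) i j : diag_alg_mx d i j = (d i)%:A *+ (i == j).
Proof. by rewrite !mxE. Qed.

Lemma eq_diag_alg_mx n (d e : 'I_n -> F) : d =1 e -> diag_alg_mx d = diag_alg_mx e.
Proof. by move=> de; congr diag_mx; apply/rowP => i; rewrite !mxE de. Qed.

Lemma alg_scalar_mxC m n (a : F) (A : 'M[R]_(m, n)) :
  (a%:A)%:M *m A = A *m (a%:A)%:M.
Proof.
by rewrite -!diag_const_mx mul_diag_mx mul_mx_diag; apply/matrixP => i j;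
  rewrite !mxE comm_alg.
Qed.

Lemma diag_alg_mx_const n (a : F) : diag_alg_mx (fun _ : 'I_n => a) = (a%:A)%:M.
Proof. by rewrite -diag_const_mx; congr diag_mx; apply/rowP => i; rewrite !mxE. Qed.

Lemma diag_alg_mx1 n : diag_alg_mx (fun _ : 'I_n => 1) = 1%:M.
Proof. by rewrite diag_alg_mx_const scale1r. Qed.

Lemma diag_alg_mxM n (d e : 'I_n -> F) :
  diag_alg_mx d *m diag_alg_mx e = diag_alg_mx (fun i => d i * e i).
Proof.
rewrite mulmx_diag; congr diag_mx; apply/rowP => i.
by rewrite !mxE -scalerAl mul1r scalerA.
Qed.

Lemma diag_alg_mxB n (d e : 'I_n -> F) :
  diag_alg_mx d - diag_alg_mx e = diag_alg_mx (fun i => d i - e i).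
Proof. by rewrite -raddfB; congr diag_mx; apply/rowP => i; rewrite !mxE scalerBl. Qed.

Lemma diag_alg_mx_sum n m (f : 'I_m -> 'I_n -> F) :
  \sum_(k < m) diag_alg_mx (f k) = diag_alg_mx (fun i => \sum_(k < m) f k i).
Proof.
rewrite -raddf_sum; congr diag_mx; apply/rowP => i.
by rewrite !mxE summxE scaler_suml; apply: eq_bigr => k _; rewrite mxE.
Qed.

Lemma diag_alg_mx_lrshift m n (d : 'I_(m + n) -> F) :
  diag_alg_mx d =
  block_mx (diag_alg_mx (d \o lshift n)) 0 0 (diag_alg_mx (d \o @rshift m n)).
Proof.
rewrite -diag_mx_row; congr diag_mx; apply/rowP => i.
by rewrite mxE -[i]splitK; case: (split i) => j; rewrite (row_mxEl, row_mxEr) !mxE.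
Qed.

Lemma mxpow_diag_alg n (d : 'I_n -> F) k :
  mxpow (diag_alg_mx d) k = diag_alg_mx (fun i => d i ^+ k).
Proof.
elim: k => [|k IH] /=; first by rewrite -(diag_alg_mx1 n).
rewrite /mxpow /= -/(mxpow _ k) IH diag_alg_mxM.
by apply: eq_diag_alg_mx => i; rewrite exprS.
Qed.

Lemma mx_peval_diag_alg (p : {poly F}) n (d : 'I_n -> F) :
  mx_peval p (diag_alg_mx d) = diag_alg_mx (fun i => p.[d i]).
Proof.
rewrite /mx_peval.
under eq_bigr do rewrite mxpow_diag_alg -diag_alg_mx_const diag_alg_mxM.
by rewrite diag_alg_mx_sum; apply: eq_diag_alg_mx => i; rewrite horner_coef.
Qed.

Lemma mx_peval_conj (p : {poly F}) n (K K' A : 'M[R]_n) :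
  K' *m K = 1%:M -> K *m K' = 1%:M ->
  mx_peval p (K *m A *m K') = K *m mx_peval p A *m K'.
Proof.
move=> K'K KK'; rewrite /mx_peval mulmx_sumr mulmx_suml; apply: eq_bigr => i _.
by rewrite mxpow_conj // !mulmxA alg_scalar_mxC.
Qed.

End AlgebraMatrices.

Section Similarity.
Variables (F : fieldType) (R : algType F).

Definition mx_similar n (A B : 'M[R]_n) :=
  exists K K' : 'M[R]_n, [/\ K' *m K = 1%:M, K *m K' = 1%:M & K *m A *m K' = B].

Lemma mx_similar_conj n (J J' A B : 'M[R]_n) :
  J' *m J = 1%:M -> J *m J' = 1%:M ->
  mx_similar A B -> mx_similar (J *m A *m J') (J *m B *m J').
Proof.
move=> J'J JJ' [K [K' [K'K KK' <-]]].
have cancel_mid X : X *m J' *m J = X by rewrite -mulmxA J'J mulmx1.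
exists (J *m K *m J'), (J *m K' *m J'); split.
- by rewrite !mulmxA cancel_mid -(mulmxA J) K'K mulmx1 JJ'.
- by rewrite !mulmxA cancel_mid -(mulmxA J) KK' mulmx1 JJ'.
by rewrite !mulmxA !cancel_mid.
Qed.

Lemma mx_similar_block_lower n (a : F) (d : 'I_n -> F) (c : 'M[R]_(n, 1)) (N : 'M[R]_n) :
  (forall i, d i != a) ->
  mx_similar (diag_alg_mx R d) (diag_alg_mx R d + N) ->
  mx_similar (block_mx (a%:A)%:M 0 0 (diag_alg_mx R d))
             (block_mx (a%:A)%:M 0 c (diag_alg_mx R d + N)).
Proof.
move=> d_neq [K [K' [K'K KK' simK]]].
set D := diag_alg_mx R d.
have KD : K *m D = (D + N) *m K by rewrite -simK -mulmxA K'K mulmx1.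
pose W := diag_alg_mx R (fun i => (a - d i)^-1).
have aDW : ((a%:A)%:M - D) *m W = 1%:M.
  rewrite -diag_alg_mx_const diag_alg_mxB diag_alg_mxM -diag_alg_mx1.
  by apply: eq_diag_alg_mx => i; rewrite mulfV // subr_eq0 eq_sym.
pose k := K *m W *m K' *m c.
have k_eq : k *m (a%:A)%:M - (D + N) *m k = c.
  rewrite -alg_scalar_mxC /k !mulmxA -!mulmxBl mulmxBl alg_scalar_mxC -KD -mulmxBr.
  by rewrite -(mulmxA K) aDW mulmx1 KK' mul1mx.
exists (block_mx 1%:M 0 k K), (block_mx 1%:M 0 (- (K' *m k)) K'); split.
- rewrite mulmx_block !(mulmx0, mul0mx, mulmx1, mul1mx, addr0, add0r) K'K mulmxA.
  by rewrite addNr -scalar_mx_block.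
- rewrite mulmx_block !(mulmx0, mul0mx, mulmx1, mul1mx, addr0, add0r) KK'.
  by rewrite mulmxN mulmxA KK' mul1mx addrN -scalar_mx_block.
rewrite !mulmx_block !(mulmx0, mul0mx, mulmx1, mul1mx, addr0, add0r) simK.
rewrite mulmxN !mulmxA simK.
have -> : (D + N) *m K *m W *m K' *m c = (D + N) *m k by rewrite /k !mulmxA.
by rewrite k_eq.
Qed.

Lemma mx_similar_diag_lower n (d : 'I_n -> F) (N : 'M[R]_n) :
  injective d -> (forall i j : 'I_n, (i <= j)%N -> N i j = 0) ->
  mx_similar (diag_alg_mx R d) (diag_alg_mx R d + N).
Proof.
elim: n d N => [|n IH].
  by move=> d N _ _; exists 1%:M, 1%:M; split; apply/matrixP => [[]].
rewrite -add1n => d N d_inj N_low.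
have ulN : ulsubmx N = 0 :> 'M_1 by apply/matrixP => i j; rewrite !mxE N_low ?ord1.
have urN : ursubmx N = 0 :> 'M_(1, n) by apply/matrixP => i j; rewrite !mxE N_low ?ord1.
have drN (i j : 'I_n) : (i <= j)%N -> drsubmx N i j = 0.
  by move=> le_ij; rewrite !mxE N_low.
rewrite -[N]submxK ulN urN diag_alg_mx_lrshift add_block_mx.
have -> : diag_alg_mx R (d \o lshift n) = ((d (lshift n ord0))%:A)%:M.
  by rewrite -diag_alg_mx_const; apply: eq_diag_alg_mx => i; rewrite ord1.
rewrite !(addr0, add0r).
apply: mx_similar_block_lower => [i|]; first by rewrite (inj_eq d_inj).
by apply: IH drN; exact: inj_comp d_inj (@rshift_inj _ _).
Qed.

Lemma mx_similar_diag_upper n (d : 'I_n -> F) (N : 'M[R]_n) :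
  injective d -> (forall i j : 'I_n, (j <= i)%N -> N i j = 0) ->
  mx_similar (diag_alg_mx R d) (diag_alg_mx R d + N).
Proof.
move=> d_inj N_up; set J := rev_mx R n.
have JJ : J *m J = 1%:M := @rev_mxK R n.
have J_diag : J *m diag_alg_mx R (d \o @rev_ord n) *m J = diag_alg_mx R d.
  apply/matrixP => i j; rewrite rev_mx_conj !(mxE, diag_alg_mxE) /=.
  by rewrite rev_ordK (inj_eq rev_ord_inj).
have JNJ_low (i j : 'I_n) : (i <= j)%N -> (J *m N *m J) i j = 0.
  by move=> le_ij; rewrite rev_mx_conj mxE N_up //=; have := ltn_ord j; lia.
have dJ_inj : injective (d \o @rev_ord n) := inj_comp d_inj rev_ord_inj.
have := mx_similar_conj JJ JJ (mx_similar_diag_lower dJ_inj JNJ_low).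
by rewrite mulmxDr mulmxDl J_diag rev_mx_conjK.
Qed.

End Similarity.

Lemma infinite_uniq_seq (T : eqType) m :
  infinite_type T -> exists s : seq T, uniq s /\ size s = m.
Proof.
move=> T_inf; elim: m => [|m [s [s_uniq s_size]]]; first by exists [::].
by have [x x_notin] := T_inf s; exists (x :: s); rewrite /= x_notin s_uniq s_size.
Qed.

Section InfiniteField.
Variables (F : fieldType) (p : {poly F}).
Hypotheses (F_inf : infinite_type F) (p_nonconst : (1 < size p)%N).

Lemma exists_nonroot (q : {poly F}) : q != 0 -> exists x, ~~ root q x.
Proof.
move=> q_neq0; have [s [s_uniq s_size]] := infinite_uniq_seq (size q) F_inf.
have [x _ x_nonroot] : exists2 x, x \in s & ~~ root q x.
  apply/allPn/negP => all_roots.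
  by have := max_poly_roots q_neq0 all_roots s_uniq; rewrite s_size ltnn.
by exists x.
Qed.

Lemma exists_horner_notin (vs : seq F) : exists x, p.[x] \notin vs.
Proof.
have q_neq0 : \prod_(v <- vs) (p - v%:P) != 0.
  rewrite prodf_seq_neq0; apply/allP => v _ /=; rewrite subr_eq0.
  by apply: contraTneq p_nonconst => ->; rewrite size_polyC; case: (v != 0).
have [x x_nonroot] := exists_nonroot q_neq0; exists x.
apply: contra x_nonroot => px_in.
rewrite rootE horner_prod prodf_seq_eq0; apply/hasP.
by exists p.[x] => //; rewrite !hornerE subrr.
Qed.

Lemma exists_horner_inj n : exists mu : 'I_n -> F, injective (fun i => p.[mu i]).
Proof.
have [s [s_uniq s_size]] : exists s : seq F, uniq (map (horner p) s) /\ size s = n.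
  elim: n => [|m [s [s_uniq s_size]]]; first by exists [::].
  have [x x_notin] := exists_horner_notin (map (horner p) s).
  by exists (x :: s); rewrite /= x_notin s_uniq s_size.
exists (fun i => s`_i) => i j /= /eqP; rewrite -!(nth_map 0 0 (horner p)) ?s_size //.
by rewrite nth_uniq ?size_map ?s_size // => /eqP/val_inj.
Qed.

End InfiniteField.

Section PolynomialCommutators.
Variables (F : fieldType) (R : algType F) (p : {poly F}).

Lemma mx_similar_mx_peval n (Z Y : 'M[R]_n) :
  mx_similar (mx_peval p Z) Y -> exists2 A, mx_similar Z A & mx_peval p A = Y.
Proof.
move=> [K [K' [K'K KK' <-]]]; exists (K *m Z *m K'); last exact: mx_peval_conj.
by exists K, K'.
Qed.

Lemma p_commutator_set_similar n (Z A B : 'M[R]_n) :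
  mx_similar Z A -> mx_similar Z B -> p_commutator_set p (mx_peval p A - mx_peval p B).
Proof.
move=> [K1 [K1' [K1'K1 _ <-]]] [K2 [K2' [K2'K2 _ <-]]].
exists (K1 *m K2'), (K2 *m Z *m K1').
by rewrite !mulmxA -(mulmxA K1 K2') K2'K2 mulmx1 -(mulmxA (K2 *m Z)) K1'K1 mulmx1.
Qed.

Lemma p_commutator_set_diag0 n (M : 'M[R]_n) :
  infinite_type F -> (1 < size p)%N -> (forall i, M i i = 0) -> p_commutator_set p M.
Proof.
move=> F_inf p_nonconst M_diag0.
have [mu mu_inj] := exists_horner_inj F_inf p_nonconst n.
pose U := \matrix_(i, j) (if (i < j)%N then M i j else 0).
pose L := \matrix_(i, j) (if (j < i)%N then - M i j else 0).
have U_up (i j : 'I_n) : (j <= i)%N -> U i j = 0 by rewrite mxE ltnNge => ->.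
have L_low (i j : 'I_n) : (i <= j)%N -> L i j = 0 by rewrite mxE ltnNge => ->.
have D_eq : diag_alg_mx R (fun i => p.[mu i]) = mx_peval p (diag_alg_mx R mu).
  by rewrite mx_peval_diag_alg.
have := mx_similar_diag_upper mu_inj U_up; rewrite {1}D_eq.
case/mx_similar_mx_peval => A simA peval_A.
have := mx_similar_diag_lower mu_inj L_low; rewrite {1}D_eq.
case/mx_similar_mx_peval => B simB peval_B.
have := p_commutator_set_similar simA simB.
rewrite peval_A peval_B opprD addrACA subrr add0r.
congr p_commutator_set; apply/matrixP => i j; rewrite !mxE.
by case: ltngtP => [_|_|/val_inj ->]; rewrite ?subr0 ?sub0r ?opprK // M_diag0 subr0.
Qed.

End PolynomialCommutators.

Lemma ordS_val n (i : 'I_n.+1) : i != ord_max -> ordS i = i.+1 :> nat.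
Proof.
by rewrite -val_eqE /= => /eqP i_neq; rewrite modn_small //; have := ltn_ord i; lia.
Qed.

Lemma ordS_max n : ordS (@ord_max n) = ord0.
Proof. by apply: val_inj; rewrite /= modnn. Qed.

Lemma ordS_neq n (i : 'I_n.+2) : (ordS i == i) = false.
Proof.
case: (eqVneq i ord_max) => [->|/ordS_val S_i]; first by rewrite ordS_max.
by apply/eqP => /(congr1 (@nat_of_ord _)); rewrite S_i; lia.
Qed.

Lemma lower_trig_mx_factor_diag0 (R : pzRingType) n (T : 'M[R]_n) :
  (3 <= n)%N -> is_trig_mx T ->
  exists C D : 'M[R]_n, [/\ forall i, C i i = 0, forall i, D i i = 0 & T = C *m D].
Proof.
case: n T => [|[|[|m]]] // T _ /is_trig_mxP T_low.
pose b : 'I_m.+3 := ord_max; pose a : 'I_m.+3 := inord m.+1; pose c : 'I_m.+3 := inord m.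
have [a_val c_val] : a = m.+1 :> nat /\ c = m :> nat by rewrite !inordK ?ltnS ?leqW.
have [b_neq_a c_neq_a c_neq_b] :
    [/\ (b == a) = false, (c == a) = false & (c == b) = false].
  by rewrite -!val_eqE /= a_val c_val; split; lia.
have Sa : ordS a = b by apply: ord_inj; rewrite ordS_val ?a_val // eq_sym b_neq_a.
have Sc : ordS c = a by apply: ord_inj; rewrite ordS_val ?a_val ?c_val // c_neq_b.
have pred_a : ord_pred a = c by rewrite -Sc ordSK.
(* C = T P^-1 + e_b x and D = P + e_a y for the cyclic shift P: the only
   nonzero diagonal entry of T P^-1 is T b 0, cancelled by x b, and
   y = - x \o ord_pred makes the rank-one corrections cancel in C D. *)
pose x j := if j == a then 1 - T b b else if j == b then - T b ord0 else 0.
pose y j := - x (ord_pred j).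
pose C := \matrix_(i, j) (T i (ordS j) + (i == b)%:R * x j).
pose D := \matrix_(i, j) ((j == ordS i)%:R + (i == a)%:R * y j) : 'M[R]_m.+3.
have CD i j : (C *m D) i j = C i (ord_pred j) + C i a * y j.
  rewrite mxE; under eq_bigr do rewrite [D _ _]mxE mulrDr.
  rewrite big_split /= (bigD1 (ord_pred j)) //= ord_predK eqxx mulr1 big1 ?addr0.
    rewrite (bigD1 a) //= eqxx mul1r big1 ?addr0 // => k /negPf k_neq.
    by rewrite k_neq mul0r mulr0.
  by move=> k k_neq; rewrite eq_sym (canF_eq (@ordSK _)) (negPf k_neq) mulr0.
exists C, D; split.
- move=> i; rewrite mxE; case: (eqVneq i b) => [->|i_neq].
    by rewrite ordS_max mul1r /x b_neq_a eqxx addrN.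
  by rewrite mul0r addr0 T_low // ordS_val.
- move=> i; rewrite mxE eq_sym ordS_neq add0r.
  case: (eqVneq i a) => [->|]; last by rewrite mul0r.
  by rewrite /y /x pred_a c_neq_a c_neq_b oppr0 mulr0.
apply/matrixP => i j; rewrite CD !mxE ord_predK Sa.
case: (eqVneq i b) => [->|i_neq].
  have x_a : x a = 1 - T b b by rewrite /x eqxx.
  by rewrite !mul1r x_a [T b b + _]addrC subrK mul1r addrK.
have lt_ib : (i < b)%N.
  by move: i_neq; rewrite -val_eqE /= => /eqP; have := ltn_ord i; lia.
by rewrite mulr0n !mul0r !addr0 (T_low i b lt_ib) mul0r addr0.
Qed.

Lemma trig_mx_factor_diag0 (R : pzRingType) n (T : 'M[R]_n) :
  (3 <= n)%N -> is_trig_mx T || is_trig_mx T^T ->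
  exists C D : 'M[R]_n, [/\ forall i, C i i = 0, forall i, D i i = 0 & T = C *m D].
Proof.
move=> n_ge3 /orP[|/is_trig_mxP T_up]; first exact: lower_trig_mx_factor_diag0.
set J := rev_mx R n; have JJ : J *m J = 1%:M := @rev_mxK R n.
have JTJ_low : is_trig_mx (J *m T *m J).
  apply/is_trig_mxP => i j lt_ij; rewrite rev_mx_conj mxE.
  have := T_up (rev_ord j) (rev_ord i); rewrite mxE; apply.
  by have := ltn_ord j; rewrite /=; lia.
have [C [D [C0 D0 JTJ_eq]]] := lower_trig_mx_factor_diag0 n_ge3 JTJ_low.
exists (J *m C *m J), (J *m D *m J); split=> [i|i|].
- by rewrite rev_mx_conj mxE C0.
- by rewrite rev_mx_conj mxE D0.
by rewrite -[T]rev_mx_conjK -/J JTJ_eq !mulmxA -(mulmxA _ J J) JJ mulmx1.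
Qed.

Theorem theorem4p1 (F : fieldType) (R : algType F) (n : nat) (p : {poly F})
  (hF : infinite_type F) (hn : (3 <= n)%N) (hp : (1 < size p)%N)
  (T : 'M[R]_n) (hT : is_trig_mx T || is_trig_mx T^T) :
  exists C D : 'M[R]_n,
    p_commutator_set p C /\ p_commutator_set p D /\ T = C *m D.
Proof.
have [C [D [C0 D0 ->]]] := trig_mx_factor_diag0 hn hT.
by exists C, D; split; [|split]; try exact: p_commutator_set_diag0.
Qed.
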